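(* Let $n\ge5$, let $\Delta$ be a non-singular $(d-1)$-complex on $[n-1]$ with $1\le d\le n-4$, and let $\Delta'$ be any complex on $[n-1]$ (of any dimension). Then $D_\Delta=D_{\Delta'}$ in $\operatorname{Pic}(\overline{\mathcal M}_{0,n})$ if and only if $\Delta'=\Delta$.
   Context: $\operatorname{Pic}(\overline{\mathcal M}_{0,n})=\mathbb ZH\oplus\bigoplus_I\mathbb ZE_I$ (sum over $I\subseteq[n-1]$, $1\le|I|\le n-4$) via a fixed Kapranov blow-up presentation $\overline{\mathcal M}_{0,n}\cong\operatorname{Bl}\mathbb P^{n-3}$; $H$ is the hyperplane class and $E_I$ the exceptional divisors. A $k$-simplex on $[n-1]$ is a multiset of cardinality $k+1$ with entries in $[n-1]$, a $k$-complex is a finite set of distinct $k$-simplices; a simplex is singular if some entry has multiplicity $\ge2$, and a complex is non-singular if none of its simplices is singular. For a $k$-complex $\Delta$ put $D_\Delta=(k+1)H-\sum_I\big(k+1-\max_{\sigma\in\Delta}\sum_{i\in I}\operatorname{mult}_i(\sigma)\big)E_I$, where $\operatorname{mult}_i(\sigma)$ is the multiplicity of $i$ in $\sigma$. *)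

From HB Require Import structures.
From mathcomp Require Import all_boot all_order all_algebra.
Set Implicit Arguments. Unset Strict Implicit. Unset Printing Implicit Defensive.
Import GRing.Theory Num.Theory.

(* Labels: the set [n-1] = {1,...,n-1} is encoded as 'I_(n-1) (label j+1 <-> j). *)

Definition multiset (n : nat) := {ffun 'I_(n.-1) -> nat}.

Definition mcard n (s : multiset n) : nat := \sum_(i : 'I_(n.-1)) s i.

Definition is_simplex n (k : nat) (s : multiset n) : bool := mcard s == k.+1.

(* A k-complex is a pair (k, S): its dimension k and a finite set of distinct
   k-simplices S, given as a list whose membership is the set (so two
   complexes (k,S), (k',S') are equal iff k = k' and S =i S'). *)
Definition is_complex n (k : nat) (S : seq (multiset n)) : bool :=
  all (is_simplex k) S.

Definition singular n (s : multiset n) : bool := [exists i, 1 < s i].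

Definition nonsingular n (S : seq (multiset n)) : bool :=
  all (fun s => ~~ singular s) S.

(* Pic(M_{0,n}) = Z H (+) (+)_I Z E_I,  I subset of [n-1], 1 <= |I| <= n-4.
   An element is encoded by its H-coefficient and its family of E_I-coefficients;
   coefficients at indices I outside the range are forced to be 0, so Leibniz
   equality of encodings is equality in Pic. *)
Definition pic (n : nat) := (int * {ffun {set 'I_(n.-1)} -> int})%type.

Definition Ebasis n (I : {set 'I_(n.-1)}) : bool := (1 <= #|I| <= n - 4)%N.

Definition D_Delta n (k : nat) (S : seq (multiset n)) : pic n :=
  (Posz k.+1,
   [ffun I : {set 'I_(n.-1)} =>
      if Ebasis I then
        (- (Posz k.+1 - Posz (\max_(s <- S) \sum_(i in I) s i)))%R
      else 0%R]).
Arguments D_Delta n k S : clear implicits.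

From HB Require Import structures.
From mathcomp Require Import all_boot all_order all_algebra.
From mathcomp Require Import zify.
Set Implicit Arguments. Unset Strict Implicit.

(* The divisor D_Delta of a k-complex Delta records k + 1 (its H-coefficient)
   and, for every admissible index set I (1 <= |I| <= n-4), the maximal
   I-weight  maxweight Delta I = max_{s in Delta} sum_{i in I} mult_i s.
   Hence D_Delta = D_Delta' forces k = k' and equal maximal weights on all
   admissible I.  For a non-singular simplex s of a (d-1)-complex, d <= n-4,
   its support I = supp s is admissible with |I| = d, and a simplex t of
   cardinality d whose multiplicities are at most 1 attains I-weight d only
   if t = s.  So every simplex of Delta lies in Delta' as soon as the
   simplices of Delta' have multiplicities at most 1; this holds because the
   maximal weight of every singleton {i} (admissible as n >= 5) is at most 1
   for Delta, hence for Delta'.  The argument is symmetric, giving Delta = Delta'.  The converse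
   direction is immediate since D_Delta only depends on the set of simplices. *)

Section SimplexWeights.
Variable n : nat.
Implicit Types (s t : multiset n) (S : seq (multiset n)) (I : {set 'I_(n.-1)}).

Definition maxweight S I : nat := \max_(s <- S) \sum_(i in I) s i.

Lemma maxweight_attained S I :
  0 < maxweight S I -> exists2 t, t \in S & \sum_(i in I) t i = maxweight S I.
Proof.
rewrite /maxweight; elim: S => [|x S IH]; first by rewrite big_nil.
rewrite big_cons => pos_max.
case: (leqP (\sum_(i in I) x i) (\max_(s <- S) \sum_(i in I) s i)) => [le_xS | lt_Sx].
- have max_S : maxn (\sum_(i in I) x i) (\max_(s <- S) \sum_(i in I) s i)
               = \max_(s <- S) \sum_(i in I) s i by apply/maxn_idPr.
  rewrite max_S in pos_max *.
  by have [t tS Ht] := IH pos_max; exists t; rewrite // inE tS orbT.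
- by exists x; rewrite ?inE ?eqxx //; apply/esym/maxn_idPl/ltnW.
Qed.

Definition zero_one s : Prop := forall i, s i <= 1.

Lemma zero_oneP s : ~~ singular s <-> zero_one s.
Proof.
rewrite /singular negb_exists; split=> [/forallP le1 i | le1].
  by have := le1 i; rewrite -leqNgt.
by apply/forallP => i; rewrite -leqNgt.
Qed.

Definition supp s : {set 'I_(n.-1)} := [set i | 0 < s i].

Lemma weight_le_mcard s I : \sum_(i in I) s i <= mcard s.
Proof. by rewrite /mcard big_mkcond leq_sum // => i _; case: (_ \in _). Qed.

Lemma weight_supp s : \sum_(i in supp s) s i = mcard s.
Proof.
rewrite /mcard [RHS](bigID [in supp s]) /= [X in _ = _ + X]big1 ?addn0 //.
by move=> i; rewrite inE -leqNgt leqn0 => /eqP.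
Qed.

Lemma card_supp s : zero_one s -> #|supp s| = mcard s.
Proof.
move=> s01; rewrite -weight_supp -sum1_card; apply: eq_bigr => i.
by rewrite inE; have := s01 i; lia.
Qed.

Lemma eq_of_full_weight s t d : zero_one s -> zero_one t ->
  mcard s = d -> mcard t = d -> \sum_(i in supp s) t i = d -> t = s.
Proof.
move=> s01 t01 ms mt wt.
have t_out i : i \notin supp s -> t i = 0.
  have : \sum_(i | i \notin supp s) t i == 0.
    by move: mt; rewrite /mcard (bigID [in supp s]) /= wt -{2}[d]addn0 => /addnI ->.
  by rewrite sum_nat_eq0 => /forallP/(_ i)/implyP H /H/eqP.
have le_ts i : t i <= s i.
  by case: (boolP (i \in supp s)) => [|/t_out ->//]; rewrite inE; have := t01 i; lia.
have : \sum_(i : 'I_(n.-1)) (s i - t i) == 0.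
  have split_s : \sum_(i : 'I_(n.-1)) s i
                 = \sum_(i : 'I_(n.-1)) t i + \sum_(i : 'I_(n.-1)) (s i - t i).
    by rewrite -big_split /=; apply: eq_bigr => i _; rewrite subnKC ?le_ts.
  by move: split_s; rewrite -/(mcard s) -/(mcard t) ms mt -{1}[d]addn0 => /addnI <-.
rewrite sum_nat_eq0 => /forallP eq0; apply/ffunP => i.
by have /= /eqP := eq0 i; have := le_ts i; lia.
Qed.

Lemma mem_of_maxweight (adm : {set 'I_(n.-1)} -> bool) d (A B : seq (multiset n)) :
  0 < d ->
  (forall s, s \in A -> zero_one s /\ mcard s = d) ->
  (forall s, s \in B -> zero_one s /\ mcard s = d) ->
  (forall s, s \in A -> adm (supp s)) ->
  (forall I, adm I -> maxweight A I = maxweight B I) ->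
  {subset A <= B}.
Proof.
move=> d_pos simA simB admA eqAB s sA.
have [s01 ms] := simA s sA.
have maxA : maxweight A (supp s) = d.
  apply/eqP; rewrite eqn_leq; apply/andP; split.
    apply/bigmax_leqP_seq => t tA _.
    by have [_ <-] := simA t tA; apply: weight_le_mcard.
  rewrite -ms -weight_supp.
  exact: (leq_bigmax_seq (F := fun t => \sum_(i in supp s) t i) _ sA isT).
rewrite eqAB ?admA // in maxA.
have maxB_pos : 0 < maxweight B (supp s) by rewrite maxA.
have [t tB wt] := maxweight_attained maxB_pos.
have [t01 mt] := simB t tB.
by rewrite -(eq_of_full_weight s01 t01 ms mt) // wt maxA.
Qed.

Lemma zero_one_of_singletons A B :
  (forall s, s \in A -> zero_one s) ->
  (forall i, maxweight A [set i] = maxweight B [set i]) ->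
  forall t, t \in B -> zero_one t.
Proof.
move=> A01 eqAB t tB i.
have maxA_le1 : maxweight A [set i] <= 1.
  by apply/bigmax_leqP_seq => s sA _; rewrite big_set1; apply: A01.
apply: leq_trans maxA_le1; rewrite eqAB.
have := leq_bigmax_seq (F := fun t => \sum_(j in [set i]) t j) _ tB isT.
by rewrite big_set1.
Qed.

Lemma mcard_of_complex k S s : is_complex k S -> s \in S -> mcard s = k.+1.
Proof. by move=> /allP cS /cS /eqP. Qed.

Lemma Ebasis_set1 i : 5 <= n -> @Ebasis n [set i].
Proof. by rewrite /Ebasis cards1; lia. Qed.

Lemma Ebasis_supp s : zero_one s -> 1 <= mcard s <= n - 4 -> @Ebasis n (supp s).
Proof. by move=> s01; rewrite /Ebasis card_supp. Qed.

Lemma D_Delta_eq_mem k S S' : S =i S' -> D_Delta n k S = D_Delta n k S'.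
Proof.
move=> eqS; congr (_, _); apply/ffunP => I; rewrite !ffunE.
by rewrite (eq_big_idem _ _ maxnn eqS).
Qed.

Lemma D_Delta_inj k k' S S' : D_Delta n k S = D_Delta n k' S' ->
  k = k' /\ forall I, @Ebasis n I -> maxweight S I = maxweight S' I.
Proof.
case=> [[<-] eqE]; split=> // I adm.
have := congr1 (fun f : {ffun _ -> int} => f I) eqE; rewrite /= !ffunE adm.
by move=> /GRing.oppr_inj /GRing.addrI /GRing.oppr_inj [].
Qed.

End SimplexWeights.

Theorem mainTheorem3 (n d : nat) (S : seq (multiset n)) (k' : nat) (S' : seq (multiset n)) :
  (5 <= n)%N -> (1 <= d)%N -> (d <= n - 4)%N ->
  is_complex d.-1 S -> nonsingular S ->
  is_complex k' S' ->
  D_Delta n d.-1 S = D_Delta n k' S' <-> (k' = d.-1 /\ S' =i S).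
Proof.
move=> n5 d1 dn cS nS cS'; split; last first.
  by case=> -> eqS; apply: D_Delta_eq_mem => s; rewrite eqS.
case/D_Delta_inj=> dk' eq_mw; subst k'; split=> //.
have mcard_d (T : seq (multiset n)) s : is_complex d.-1 T -> s \in T -> mcard s = d.
  by move=> cT /(mcard_of_complex cT) ->; rewrite prednK.
have simS s : s \in S -> zero_one s /\ mcard s = d.
  by move=> sS; split; [apply/zero_oneP/(allP nS) | apply: mcard_d cS sS].
have simS' s : s \in S' -> zero_one s /\ mcard s = d.
  move=> sS'; split; last exact: mcard_d cS' sS'.
  apply: zero_one_of_singletons sS' => [t /simS [] // | i].
  by rewrite eq_mw ?Ebasis_set1.
have adm_supp (T : seq (multiset n)) :
    (forall s, s \in T -> zero_one s /\ mcard s = d) ->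
    forall s, s \in T -> @Ebasis n (supp s).
  by move=> simT s /simT [s01 ms]; rewrite Ebasis_supp // ms d1.
move=> s; apply/idP/idP => s_in.
- by apply: (mem_of_maxweight d1 simS' simS (adm_supp _ simS') _ s_in) => I /eq_mw ->.
- exact: (mem_of_maxweight d1 simS simS' (adm_supp _ simS) eq_mw).
Qed.
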